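(* If $C$ is a smooth cone in a finite-dimensional Euclidean space $X$, then its polar cone $C^\circ$ is also smooth.
   Context: A cone $C$ is regular if it is pointed, closed, convex, with nonempty interior. A ray is $\{\lambda x:\lambda\ge0\}$, $x\ne0$; an extreme ray of $C$ is a ray in $C$ which is a face of $C$ (a convex $\mathcal F\subset C$ such that $x,y\in C$, $\lambda x+(1-\lambda)y\in\mathcal F$ for some $0<\lambda<1$ implies $x,y\in\mathcal F$). A regular cone $C$ is smooth if every boundary point of $C$ lies on an extreme ray of $C$ and, for every non-zero point $x$ of any extreme ray, the normal cone $N_C(x)$ has dimension one. $C^\circ=\{y:\langle x,y\rangle\le0\ \forall x\in C\}$. *)

(* Euclidean space = 'rV[R]_n with the
   standard inner product; topology = the canonical (product) topology on
   matrices from matrix_normedtype. *)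
From HB Require Import structures.
From mathcomp Require Import all_boot all_order all_algebra.
From mathcomp Require Import all_classical all_reals all_analysis.
Set Implicit Arguments. Unset Strict Implicit. Unset Printing Implicit Defensive.
Import Order.TTheory GRing.Theory Num.Theory.
Import numFieldNormedType.Exports.
Local Open Scope classical_set_scope.
Local Open Scope ring_scope.

Section Cones.
Variables (R : realType) (n : nat).
Notation V := 'rV[R]_n.

Definition inner (u v : V) : R := (u *m v^T) 0 0.

Definition is_cone (C : set V) : Prop :=
  forall x l, C x -> 0 <= l -> C (l *: x).

Definition convex_set (C : set V) : Prop :=
  forall x y (t : R), C x -> C y -> 0 <= t -> t <= 1 -> C (t *: x + (1 - t) *: y).

Definition pointed (C : set V) : Prop :=
  forall x, C x -> C (- x) -> x = 0.

Definition regular_cone (C : set V) : Prop :=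
  [/\ is_cone C, convex_set C, pointed C, closed C & (interior C) !=set0].

Definition ray (x : V) : set V := [set y | exists2 l : R, 0 <= l & y = l *: x].

Definition is_face (C F : set V) : Prop :=
  [/\ F `<=` C, convex_set F &
     forall x y (l : R), C x -> C y -> 0 < l -> l < 1 ->
       F (l *: x + (1 - l) *: y) -> F x /\ F y].

Definition extreme_ray (C r : set V) : Prop :=
  exists2 x : V, x != 0 & r = ray x /\ is_face C r.

Definition normal_cone (C : set V) (x : V) : set V :=
  [set y | forall z, C z -> inner y (z - x) <= 0].

Definition polar (C : set V) : set V :=
  [set y | forall x, C x -> inner x y <= 0].

(* dimension of (the linear span of) a set S: the maximal number of linearly
   independent vectors of S *)
Definition set_dim (S : set V) (k : nat) : Prop :=
  (exists M : 'M[R]_(k, n), row_free M /\ forall i, S (row i M)) /\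
  (forall M : 'M[R]_(k.+1, n), (forall i, S (row i M)) -> ~~ row_free M).

Definition boundary (C : set V) : set V := closure C `\` interior C.

Definition smooth_cone (C : set V) : Prop :=
  [/\ regular_cone C,
      (forall x, boundary C x -> exists2 r, extreme_ray C r & r x) &
      (forall r x, extreme_ray C r -> r x -> x != 0 -> set_dim (normal_cone C x) 1)].

End Cones.

From Pilot Require Import Defs.
From HB Require Import structures.
From mathcomp Require Import all_boot all_order all_algebra.
From mathcomp Require Import all_classical all_reals all_analysis.
From mathcomp Require Import ring lra.
Set Implicit Arguments. Unset Strict Implicit. Unset Printing Implicit Defensive.
Import Order.TTheory GRing.Theory Num.Theory.
Import numFieldNormedType.Exports.
Local Open Scope classical_set_scope.
Local Open Scope ring_scope.

(* By the bipolar theorem C°° = C, and for x in C the normal cone N_C(x) is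
   the face {y in C° | <x, y> = 0} of C°.  A nonzero boundary point y of C° is
   orthogonal to some nonzero x in C; such an x is a boundary point of C, so
   N_C(x) is one-dimensional, i.e. the ray through y, and this ray is a face of
   C°.  Dually N_C°(y) = {x in C | <x, y> = 0}: for two of its elements x and
   a, the sum x + a is again a boundary point of C, and the extreme ray through
   x + a, being a face, contains both x and a; hence N_C°(y) is a line. *)

Section EuclideanCones.
Variables (R : realType) (n : nat).
Notation V := 'rV[R]_n.
Implicit Types (u v w x y z : V) (C K : set V).

Lemma innerE u v : inner u v = \sum_i u 0 i * v 0 i.
Proof. by rewrite /inner mxE; apply: eq_bigr => i _; rewrite mxE. Qed.

Lemma innerC u v : inner u v = inner v u.
Proof. by rewrite !innerE; apply: eq_bigr => i _; rewrite mulrC. Qed.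

Lemma innerDr u v w : inner u (v + w) = inner u v + inner u w.
Proof. by rewrite !innerE -big_split; apply: eq_bigr => i _; rewrite mxE mulrDr. Qed.

Lemma innerZr u v a : inner u (a *: v) = a * inner u v.
Proof. by rewrite !innerE mulr_sumr; apply: eq_bigr => i _; rewrite mxE mulrCA. Qed.

Lemma innerNr u v : inner u (- v) = - inner u v.
Proof. by rewrite -scaleN1r innerZr mulN1r. Qed.

Lemma innerBr u v w : inner u (v - w) = inner u v - inner u w.
Proof. by rewrite innerDr innerNr. Qed.

Lemma inner0r u : inner u 0 = 0.
Proof. by rewrite -(scale0r 0) innerZr mul0r. Qed.

Lemma innerDl u v w : inner (v + w) u = inner v u + inner w u.
Proof. by rewrite !(innerC _ u) innerDr. Qed.

Lemma innerZl u v a : inner (a *: v) u = a * inner v u.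
Proof. by rewrite !(innerC _ u) innerZr. Qed.

Lemma innerNl u v : inner (- v) u = - inner v u.
Proof. by rewrite !(innerC _ u) innerNr. Qed.

Lemma inner0l u : inner 0 u = 0.
Proof. by rewrite innerC inner0r. Qed.

Lemma inner_self_DZ u d t :
  inner (u + t *: d) (u + t *: d) = inner u u + 2 * t * inner u d + t ^+ 2 * inner d d.
Proof. by rewrite !innerDl !innerDr !innerZl !innerZr (innerC d u); ring. Qed.

Lemma inner_self_ge0 u : 0 <= inner u u.
Proof. by rewrite innerE; apply: sumr_ge0 => i _; rewrite -expr2 sqr_ge0. Qed.

Lemma inner_self_eq0 u : inner u u = 0 -> u = 0.
Proof.
rewrite innerE => /eqP; rewrite psumr_eq0 => [/allP u0|i _]; last first.
  by rewrite -expr2 sqr_ge0.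
apply/rowP => i; rewrite mxE.
by have := u0 i (mem_index_enum _); rewrite -expr2 sqrf_eq0 => /eqP.
Qed.

Lemma inner_self_gt0 u : u != 0 -> 0 < inner u u.
Proof.
move=> u0; rewrite lt_def inner_self_ge0 andbT.
by apply: contra_neq u0; exact: inner_self_eq0.
Qed.

Lemma inner_continuous y : continuous (fun x : V => inner x y).
Proof.
under eq_fun do rewrite innerE.
apply: continuous_big => [|i _]; first exact: add_continuous.
by move=> x; apply: continuousM; [exact: coord_continuous | exact: cst_continuous].
Qed.

Lemma dist2_continuous p : continuous (fun x : V => inner (x - p) (x - p)).
Proof.
under eq_fun do rewrite innerE.
apply: continuous_big => [|i _]; first exact: add_continuous.
have coord_i : continuous (fun x : V => (x - p) 0 i).
  under eq_fun do rewrite !mxE.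
  by move=> x; apply: continuousB; [exact: coord_continuous | exact: cst_continuous].
by move=> x; apply: continuousM; exact: coord_i.
Qed.

(* The norm on 'rV_n is the sup norm, hence these dimension-dependent bounds. *)
Lemma normr_mx_entry_le k m (A : 'M[R]_(k, m)) i j : `|A i j| <= `|A|.
Proof.
rewrite [leRHS]/Num.norm /= mx_normrE; apply/bigmax_geP; right => /=.
by exists (i, j).
Qed.

Lemma normr_mulmx_le m w (A : 'M[R]_(n, m)) i :
  `|(w *m A) 0 i| <= n%:R * (`|w| * `|A|).
Proof.
rewrite mxE; apply: le_trans (ler_norm_sum _ _ _) _.
rewrite mulr_natl -[n in _ *+ n]card_ord -sumr_const.
by apply: ler_sum => j _; rewrite normrM ler_pM ?normr_mx_entry_le.
Qed.

Lemma normr_inner_le u w : `|inner u w| <= n%:R * (`|u| * `|w|).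
Proof.
rewrite innerE; apply: le_trans (ler_norm_sum _ _ _) _.
rewrite mulr_natl -[n in _ *+ n]card_ord -sumr_const.
by apply: ler_sum => i _; rewrite normrM ler_pM ?normr_mx_entry_le.
Qed.

Lemma sqr_normr_le_inner w : `|w| ^+ 2 <= inner w w.
Proof.
have [->|w0] := eqVneq w 0; first by rewrite normr0 expr0n /= inner0r.
have [[i j] /= wij] : exists ij : 'I_1 * 'I_n, mx_norm w = `|w ij.1 ij.2|.
  by apply: mx_norm_neq0; rewrite -[mx_norm w]/(`|w|) normr_eq0.
rewrite [`|w|]wij innerE (bigD1 j) //= (ord1 i) -normrX ger0_norm ?sqr_ge0 //.
by rewrite expr2 lerDl; apply: sumr_ge0 => k _; rewrite -expr2 sqr_ge0.
Qed.

Lemma lt_mul_of_lt_divD1 (K b a : R) : 0 <= K -> 0 <= b -> b < a / (K + 1) -> K * b < a.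
Proof. by move=> K0 b0; rewrite ltr_pdivlMr ?ltr_wpDl // => ba; nra. Qed.

Lemma interiorP (A : set V) x :
  interior A x <-> exists2 e, 0 < e & forall w, `|w| < e -> A (x + w).
Proof.
split.
  move=> /nbhs_ballP [e e0 Ae]; exists e => // w we; apply: Ae.
  by rewrite -ball_normE /ball_ /= opprD addrA subrr add0r normrN.
move=> [e e0 Ae]; apply/nbhs_ballP; exists e => // y.
rewrite -ball_normE /ball_ /= => xy.
by rewrite -(subrKC x y); apply: Ae; rewrite -normrN opprB.
Qed.

Lemma interior_line (A : set V) x v : interior A x ->
  exists2 s, 0 < s & forall t, `|t| <= s -> A (x + t *: v).
Proof.
move=> /interiorP [e e0 Ae]; have v1 : 0 < `|v| + 1 by rewrite ltr_wpDl.
exists (e / (`|v| + 1)); first by rewrite divr_gt0.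
move=> t ts; apply: Ae; rewrite normrZ.
apply: le_lt_trans (ler_wpM2r (normr_ge0 v) ts) _.
by rewrite mulrAC ltr_pdivrMr // ltr_pM2l // ltrDl.
Qed.

(** * Projection onto a closed convex set and the bipolar theorem *)

Lemma nearest_point C p : closed C -> C !=set0 ->
  exists2 q, C q & forall z, C z -> inner (q - p) (q - p) <= inner (z - p) (z - p).
Proof.
move=> Ccl [k Ck]; pose f x := inner (x - p) (x - p).
pose A := C `&` f @^-1` [set r | r <= f k].
have Ak : A k by split => //; exact: lexx.
have A_compact : compact A.
  apply: bounded_closed_compact; last first.
    have f_cont : continuous f := @dist2_continuous p.
    have fk_closed : closed (f @^-1` [set r | r <= f k]).
      by have := (continuous_closedP _).1 f_cont; apply; exact: closed_le.
    exact: closedI Ccl fk_closed.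
  exists (`|p| + (f k + 1)); split; first exact: num_real.
  move=> M pkM x [_ fx]; apply: le_trans (ltW pkM).
  have xp : `|x - p| <= f k + 1.
    have : f x <= f k := fx.
    have := sqr_normr_le_inner (x - p); have := sqr_ge0 (`|x - p| - 1); rewrite /f.
    move: (normr_ge0 (x - p)) (inner (x - p) (x - p)) (inner (k - p) (k - p)).
    by move: `|x - p| => a a0 g F; nra.
  by rewrite -(subrK p x) addrC; apply: le_trans (ler_normD _ _) _; rewrite lerD2l.
have [q /set_mem [Cq _] qmin] :=
  EVT_min_rV (ex_intro _ k Ak) A_compact (continuous_subspaceT (@dist2_continuous p)).
exists q => // z Cz; have [fzk|fkz] := leP (f z) (f k).
  by apply: qmin; rewrite inE.
by apply: le_trans (ltW fkz); apply: qmin; rewrite inE.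
Qed.

Lemma linear_coef_ge0 (a b : R) : 0 <= b ->
  (forall t, 0 < t -> t <= 1 -> 0 <= 2 * t * a + t ^+ 2 * b) -> 0 <= a.
Proof.
move=> b0 quad_ge0; rewrite leNgt; apply/negP => a0.
have ba : 0 < b - a by lra.
pose t := - a / (b - a).
have t0 : 0 < t by rewrite divr_gt0 // oppr_gt0.
have t1 : t <= 1 by rewrite ler_pdivrMr // mul1r; lra.
have := quad_ge0 _ t0 t1.
have -> : 2 * t * a + t ^+ 2 * b = - a ^+ 2 * (b - 2 * a) / (b - a) ^+ 2.
  by rewrite /t; field; rewrite lt0r_neq0.
by rewrite pmulr_lge0 ?invr_gt0 ?exprn_gt0 // mulNr oppr_ge0 pmulr_lle0; nra.
Qed.

(* The first-order optimality condition at the nearest point. *)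
Lemma closed_convex_projection C p : closed C -> Defs.convex_set C -> C !=set0 ->
  exists2 q, C q & forall z, C z -> inner (p - q) (z - q) <= 0.
Proof.
move=> Ccl Ccvx C0; have [q Cq qmin] := nearest_point p Ccl C0.
exists q => // z Cz; rewrite -oppr_ge0 -innerNl opprB.
apply: linear_coef_ge0 (inner_self_ge0 (z - q)) _ => t t0 t1.
have := qmin _ (Ccvx z q t Cz Cq (ltW t0) t1).
have -> : t *: z + (1 - t) *: q - p = (q - p) + t *: (z - q).
  by apply/rowP => i; rewrite !mxE; ring.
by rewrite inner_self_DZ; lra.
Qed.

Lemma cone0 C : is_cone C -> C !=set0 -> C 0.
Proof. by move=> Ccone [x Cx]; rewrite -(scale0r x); apply: Ccone. Qed.

Lemma coneD C x y : is_cone C -> Defs.convex_set C -> C x -> C y -> C (x + y).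
Proof.
move=> Ccone Ccvx Cx Cy; have mid := Ccvx x y (1 / 2) Cx Cy ltac:(lra) ltac:(lra).
have -> : x + y = 2 *: (1 / 2 *: x + (1 - 1 / 2) *: y).
  by apply/rowP => i; rewrite !mxE; field.
exact: Ccone _ 2 mid (ler0n _ 2).
Qed.

Lemma polarK C : is_cone C -> Defs.convex_set C -> closed C -> C !=set0 ->
  polar (polar C) = C.
Proof.
move=> Ccone Ccvx Ccl C0; apply/seteqP; split => [p pp|x Cx y Py]; last first.
  by rewrite innerC; apply: Py.
have [q Cq qp] := closed_convex_projection p Ccl Ccvx C0.
have pq_q : inner (p - q) q = 0.
  have q2 : 2 *: q - q = q by rewrite scalerDl scale1r addrK.
  have := qp _ (cone0 Ccone C0); have := qp _ (Ccone _ 2 Cq (ler0n _ 2)).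
  by rewrite q2 sub0r innerNr; lra.
have pq_polar : polar C (p - q).
  by move=> z Cz; rewrite innerC -[z](subrK q) innerDr pq_q addr0; apply: qp.
have : inner (p - q) (p - q) <= 0.
  by rewrite innerBr pq_q subr0; exact: pp.
move=> pq_le0; have /subr0_eq-> // : p - q = 0.
by apply: inner_self_eq0; apply/eqP; rewrite eq_le pq_le0 inner_self_ge0.
Qed.

Lemma polar_cone C : is_cone (polar C).
Proof. by move=> y l Py l0 x Cx; rewrite innerZr mulr_ge0_le0 ?Py. Qed.

Lemma polar_convex C : Defs.convex_set (polar C).
Proof.
move=> y1 y2 t P1 P2 t0 t1 x Cx; rewrite innerDr !innerZr.
by have := P1 x Cx; have := P2 x Cx; nra.
Qed.

Lemma polar_closed C : closed (polar C).
Proof.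
have -> : polar C = \bigcap_(x in C) (inner x @^-1` [set r | r <= 0]).
  by apply/seteqP; split=> y Py x Cx; exact: Py.
apply: closed_bigI => x _.
have inner_x_cont : continuous (inner x).
  rewrite (_ : inner x = fun y => inner y x); first exact: inner_continuous.
  by apply/funext => y; rewrite innerC.
by have := (continuous_closedP _).1 inner_x_cont; apply; exact: closed_le.
Qed.

Lemma polar_has0 C : polar C 0.
Proof. by move=> x _; rewrite inner0r. Qed.

Lemma interior_polar_orth C x y : interior C x -> polar C y -> inner x y = 0 -> y = 0.
Proof.
move=> /(interior_line y) [s s0 Cxy] Py xy; apply: inner_self_eq0.
have := Py _ (Cxy s ltac:(by rewrite gtr0_norm)).
rewrite innerDl innerZl xy add0r pmulr_rle0 //.
by move=> yy; apply/eqP; rewrite eq_le yy inner_self_ge0.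
Qed.

Lemma polar_pointed C : interior C !=set0 -> pointed (polar C).
Proof.
move=> [x Cx] y Py Pny.
have xy : inner x y = 0.
  have := Py x (interior_subset Cx); have := Pny x (interior_subset Cx).
  by rewrite innerNr; lra.
exact: interior_polar_orth Cx Py xy.
Qed.

(* C meets the unit sphere in a compact set, on which inner _ y is bounded away
   from 0. *)
Lemma polar_interior_of_neg C y : is_cone C -> closed C ->
  (forall x, C x -> x != 0 -> inner x y < 0) -> interior (polar C) y.
Proof.
move=> Ccone Ccl yneg; pose S := C `&` (fun x : V => `|x|) @^-1` [set r | r = 1].
have normalize x : C x -> x != 0 -> S (`|x|^-1 *: x).
  move=> Cx x0; split; first by apply: Ccone; rewrite // invr_ge0.
  by rewrite /= normrZ normrV ?unitfE ?normr_eq0 // normr_id mulVf // normr_eq0.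
have [[c0 Sc0]|S0] := pselect (S !=set0); last first.
  apply/interiorP; exists 1 => // w _ x Cx.
  have [->|x0] := eqVneq x 0; first by rewrite inner0l.
  by exfalso; apply: S0; exists (`|x|^-1 *: x); apply: normalize.
have S_compact : compact S.
  apply: bounded_closed_compact; last first.
    have sphere_closed : closed ((fun x : V => `|x|) @^-1` [set r | r = 1]).
      by have := (continuous_closedP _).1 (@norm_continuous _ V); apply; exact: closed_eq.
    exact: closedI Ccl sphere_closed.
  exists 1; split; first exact: num_real.
  by move=> M M1 x [_ /= ->]; apply: ltW.
have [c /set_mem [Cc /= c1] cmax] :=
  EVT_max_rV (ex_intro _ c0 Sc0) S_compact (continuous_subspaceT (@inner_continuous y)).
pose d := - inner c y.
have d0 : 0 < d.
  rewrite oppr_gt0; apply: yneg => //.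
  by apply: contraPneq c1 => ->; rewrite normr0 => /esym/eqP; rewrite oner_eq0.
have Cbound x : C x -> inner x y <= - d * `|x|.
  move=> Cx; have [->|x0] := eqVneq x 0; first by rewrite inner0l normr0 mulr0.
  have := cmax _ (mem_set (normalize x Cx x0)).
  by rewrite /d opprK innerZl mulrC ler_pdivrMr ?normr_gt0.
apply/interiorP; exists (d / (n%:R + 1)); first by rewrite divr_gt0 // ltr_wpDl.
move=> w wd x Cx; rewrite innerDr.
have := Cbound x Cx; have := normr_inner_le x w; have := ler_norm (inner x w).
have := lt_mul_of_lt_divD1 (ler0n _ n) (normr_ge0 w) wd; have := normr_ge0 x.
move: (inner x y) (inner x w) (`|x|) (`|w|) (n%:R : R) => a b X W N; nra.
Qed.

Lemma polar_boundary_orth C y : is_cone C -> closed C -> polar C y ->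
  ~ interior (polar C) y -> exists x, [/\ C x, x != 0 & inner x y = 0].
Proof.
move=> Ccone Ccl Py yint; apply: contrapT => no_orth; apply: yint.
apply: polar_interior_of_neg => // x Cx x0.
rewrite lt_def (Py x Cx) andbT; apply/eqP => xy; apply: no_orth; by exists x.
Qed.

(** * Nonempty interior of the polar of a pointed cone *)

Lemma not_row_free_left_kernel k m (A : 'M[R]_(k, m)) :
  ~~ row_free A -> exists2 b : 'rV_k, b != 0 & b *m A = 0.
Proof. by rewrite -kermx_eq0 => /rowV0Pn [b /sub_kermxP bA b0]; exists b. Qed.

Lemma exists_orthogonal_vector k (M : 'M[R]_(k, n)) : (k < n)%N ->
  exists2 h : V, h != 0 & M *m h^T = 0.
Proof.
move=> kn; have : ~~ row_free M^T.
  by rewrite -row_leq_rank -ltnNge; apply: leq_ltn_trans (rank_leq_col _) kn.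
move=> /not_row_free_left_kernel [h h0 hM]; exists h => //.
by rewrite -(trmxK M) -trmx_mul hM trmx0.
Qed.

Lemma row_free_rows_in (P : set V) :
  (forall h : V, h != 0 -> exists2 y, P y & inner h y != 0) ->
  forall k, (k <= n)%N -> exists M : 'M[R]_(k, n), row_free M /\ forall i, P (row i M).
Proof.
move=> P_spans; elim=> [_|k IH kn].
  by exists 0; split; [apply: inj_row_free => b _; apply/rowP => -[] | case].
have [M [Mfree MP]] := IH (ltnW kn).
have [h h0 hM] := exists_orthogonal_vector M kn.
have [y Py hy] := P_spans h h0.
exists (col_mx y M : 'M[R]_(1 + k, n)); split; last first.
  change (forall i : 'I_(1 + k), P (row i (col_mx y M))) => i.
  rewrite -[i]splitK; case: (fintype.split i) => j /=; last by rewrite rowKd.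
  by rewrite rowKu row_id.
apply: (@inj_row_free _ (1 + k)) => b; rewrite -(hsubmxK b) mul_row_col => bM.
have b1 : lsubmx b = 0.
  have := congr1 (mulmx^~ h^T) bM; rewrite /= mulmxDl mul0mx -!mulmxA hM mulmx0 addr0.
  rewrite [y *m h^T]mx11_scalar mul_mx_scalar -/(inner y h) innerC => /eqP.
  by rewrite scaler_eq0 (negbTE hy) /= => /eqP.
rewrite b1 mul0mx add0r in bM.
have b2 : rsubmx b = 0 by apply: (row_free_inj Mfree); rewrite bM mul0mx.
by rewrite b1 b2 row_mx0.
Qed.

Lemma cone_mulmx_ge0 (P : set V) k (c : 'rV[R]_k) (M : 'M[R]_(k, n)) :
  is_cone P -> Defs.convex_set P -> P 0 -> (forall i, 0 <= c 0 i) ->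
  (forall i, P (row i M)) -> P (c *m M).
Proof.
move=> Pcone Pcvx P0 c0 MP; rewrite mulmx_sum_row.
by apply: big_ind => // [x y|i _]; [exact: coneD | exact: Pcone].
Qed.

(* The positive combination with all coefficients 1 of a basis lies in P, and
   so do its small perturbations. *)
Lemma cone_row_free_interior (P : set V) (M : 'M[R]_n) :
  is_cone P -> Defs.convex_set P -> P 0 -> row_free M ->
  (forall i, P (row i M)) -> interior P !=set0.
Proof.
move=> Pcone Pcvx P0 Mfree MP.
have Mu : M \in unitmx by rewrite -row_free_unit.
pose A := invmx M.
exists (const_mx 1 *m M); apply/interiorP.
exists (1 / (n%:R * `|A| + 1)); first by rewrite divr_gt0 // ltr_wpDl ?mulr_ge0.
move=> w wsmall; rewrite -[w in _ + w](mulmxKV Mu w) -mulmxDl.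
apply: cone_mulmx_ge0 => // i; rewrite mxE [const_mx 1 0 i]mxE -/A.
have := normr_mulmx_le w A i; have := ler_norm (- (w *m A) 0 i); rewrite normrN.
have : n%:R * `|A| * `|w| < 1 by apply: lt_mul_of_lt_divD1; rewrite ?mulr_ge0.
lra.
Qed.

Lemma polar_interior C : is_cone C -> Defs.convex_set C -> pointed C -> closed C ->
  C !=set0 -> interior (polar C) !=set0.
Proof.
move=> Ccone Ccvx Cpointed Ccl C0.
have P_spans h : h != 0 -> exists2 y, polar C y & inner h y != 0.
  move=> h0; apply: contrapT => hperp; move/eqP: h0; apply.
  have h_orth y : polar C y -> inner y h = 0.
    by move=> Py; apply: contrapT => /eqP hy; apply: hperp; exists y; rewrite // innerC.
  by apply: Cpointed; rewrite -(polarK Ccone Ccvx Ccl C0) => y /h_orth;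
    rewrite ?innerNr => ->; rewrite ?oppr0.
have [M [Mfree MP]] := row_free_rows_in P_spans (leqnn n).
apply: (@cone_row_free_interior (polar C) M) => //;
  [exact: polar_cone | exact: polar_convex | exact: polar_has0].
Qed.

Lemma rV1_mulmx (b : 'rV[R]_1) (a : V) : b *m a = b 0 0 *: a.
Proof. by rewrite [b]mx11_scalar mul_scalar_mx mxE eqxx mulr1n. Qed.

Lemma set_dim1_of_line (S : set V) v : v != 0 -> S v ->
  (forall a, S a -> exists t, a = t *: v) -> set_dim S 1.
Proof.
move=> v0 Sv Sline; split.
  exists v; split; first by rewrite /row_free rank_rV v0.
  by move=> i; rewrite row_id.
move=> M MS; pose t i := projT1 (cid (Sline _ (MS i))).
have -> : M = \col_i t i *m v.
  apply/row_matrixP => i; rewrite row_mul.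
  by rewrite rV1_mulmx !mxE (projT2 (cid (Sline _ (MS i)))).
rewrite -row_leq_rank -ltnNge; apply: leq_ltn_trans (mxrankM_maxr _ _) _.
exact: rank_leq_row.
Qed.

Lemma set_dim1_line (S : set V) : set_dim S 1 ->
  (exists2 v, v != 0 & S v) /\
  (forall v a, S v -> v != 0 -> S a -> exists t, a = t *: v).
Proof.
move=> [[M [Mfree MS]] Sdep]; split.
  exists (row 0 M) => //; move: Mfree; rewrite /row_free; apply: contraTneq => M0.
  by rewrite -[M](row_id 0) M0 mxrank0.
move=> v a Sv v0 Sa; pose M2 : 'M[R]_(1 + 1, n) := col_mx a v.
have M2S i : S (row i M2).
  rewrite -[i]splitK; case: (fintype.split i) => j /=.
    by rewrite rowKu row_id.
  by rewrite rowKd row_id.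
have [b b0] := @not_row_free_left_kernel (1 + 1) n M2 (Sdep M2 M2S).
rewrite -(hsubmxK b) mul_row_col !rV1_mulmx => ab.
set b1 := lsubmx b 0 0 in ab; set b2 := rsubmx b 0 0 in ab.
have [b10|b10] := eqVneq b1 0; last first.
  exists (- b2 / b1); apply: (scalerI b10); rewrite scalerA mulrCA mulfV // mulr1.
  by apply/eqP; rewrite scaleNr -subr_eq0 opprK ab.
move: ab; rewrite b10 scale0r add0r => /eqP; rewrite scaler_eq0 (negbTE v0) orbF.
move=> /eqP b20; exfalso; move/eqP: b0; apply; rewrite -[b]hsubmxK.
have -> : lsubmx b = 0 by apply/rowP => i; rewrite (ord1 i) [RHS]mxE; exact: b10.
have -> : rsubmx b = 0 by apply/rowP => i; rewrite (ord1 i) [RHS]mxE; exact: b20.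
by rewrite row_mx0.
Qed.

(** * Normal cones and extreme rays *)

Lemma ray_of_line K y a t : pointed K -> is_cone K -> K y -> y != 0 ->
  K a -> a = t *: y -> ray y a.
Proof.
move=> Kpointed Kcone Ky y0 Ka a_ty; subst a.
have [t0|t0] := leP 0 t; first by exists t.
exfalso; move/eqP: y0; apply; apply: Kpointed => //.
have := Kcone _ (- t)^-1 Ka; rewrite invr_ge0 oppr_ge0 (ltW t0) => /(_ isT).
by rewrite scalerA invrN mulNr mulVf ?lt_eqF ?scaleN1r.
Qed.

Lemma normal_coneP K x y : is_cone K -> Defs.convex_set K -> K x ->
  normal_cone K x y <-> polar K y /\ inner y x = 0.
Proof.
move=> Kcone Kcvx Kx; split => [Ny|[Py yx] z Kz]; last first.
  by rewrite innerBr yx subr0 innerC; exact: Py.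
have := Ny 0 (cone0 Kcone (ex_intro _ x Kx)).
have := Ny (2 *: x) (Kcone _ _ Kx (ler0n _ 2)).
rewrite sub0r innerNr (_ : 2 *: x - x = x) => [yx_le yx_ge|]; last first.
  by rewrite scalerDl scale1r addrK.
split; last by apply/eqP; rewrite eq_le yx_le -oppr_le0.
by move=> z Kz; have := Ny _ (coneD Kcone Kcvx Kx Kz); rewrite addrAC subrr add0r innerC.
Qed.

Lemma normal_cone_face C x : is_cone C -> Defs.convex_set C -> C x ->
  is_face (polar C) (normal_cone C x).
Proof.
move=> Ccone Ccvx Cx; split.
- by move=> y /(normal_coneP y Ccone Ccvx Cx) [].
- move=> a b t /(normal_coneP _ Ccone Ccvx Cx) [Pa ax].
  move=> /(normal_coneP _ Ccone Ccvx Cx) [Pb bx] t0 t1.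
  apply/(normal_coneP _ Ccone Ccvx Cx); split; first exact: polar_convex.
  by rewrite innerDl !innerZl ax bx !mulr0 addr0.
- move=> a b l Pa Pb l0 l1 /(normal_coneP _ Ccone Ccvx Cx) [_].
  have := Pa x Cx; have := Pb x Cx; rewrite !(innerC x) innerDl !innerZl => ax bx abx.
  have ax0 : inner a x = 0 by nra.
  have bx0 : inner b x = 0 by nra.
  by split; apply/(normal_coneP _ Ccone Ccvx Cx).
Qed.

Lemma normal_ray_extreme C x y : is_cone C -> Defs.convex_set C ->
  pointed (polar C) -> C x -> set_dim (normal_cone C x) 1 ->
  normal_cone C x y -> y != 0 -> extreme_ray (polar C) (ray y).
Proof.
move=> Ccone Ccvx Ppointed Cx Ndim1 Ny y0.
have N_ray : normal_cone C x = ray y.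
  apply/seteqP; split => [a Na|_ [t t0 ->]].
    have [Pa _] := (normal_coneP a Ccone Ccvx Cx).1 Na.
    have [Py _] := (normal_coneP y Ccone Ccvx Cx).1 Ny.
    have [t a_ty] := (set_dim1_line Ndim1).2 _ _ Ny y0 Na.
    exact: ray_of_line Ppointed (@polar_cone C) Py y0 Pa a_ty.
  have [Py yx] := (normal_coneP y Ccone Ccvx Cx).1 Ny.
  apply/(normal_coneP _ Ccone Ccvx Cx).
  by split; [exact: polar_cone | rewrite innerZl yx mulr0].
by exists y => //; rewrite -N_ray; split => //; exact: normal_cone_face.
Qed.

Lemma face_ray_interior K y0 y : is_face K (ray y0) -> ray y0 y -> interior K y ->
  forall v, exists t, v = t *: y0.
Proof.
move=> [_ _ face] ry yint v; have [s s0 Ks] := interior_line v yint.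
have Kp : K (y + s *: v) by apply: Ks; rewrite gtr0_norm.
have Km : K (y + - s *: v) by apply: Ks; rewrite normrN gtr0_norm.
have mid : 1 / 2 *: (y + s *: v) + (1 - 1 / 2) *: (y + - s *: v) = y.
  by apply/rowP => i; rewrite !mxE; field.
have [[t _ ys] _] := face _ _ (1 / 2) Kp Km ltac:(lra) ltac:(lra) (eq_ind_r _ ry mid).
case: ry => l _ yl; exists (s^-1 * (t - l)).
apply: (scalerI (lt0r_neq0 s0)); rewrite scalerA mulrA mulfV ?lt0r_neq0 // mul1r.
by rewrite scalerBl -ys -yl addrC addKr.
Qed.

(** * The polar of a smooth cone *)

Section SmoothCone.
Variable C : set V.
Hypotheses (Ccone : is_cone C) (Ccvx : Defs.convex_set C) (Cpointed : pointed C)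
  (Ccl : closed C) (Cint : interior C !=set0).
Hypothesis C_boundary_ray : forall x, boundary C x -> exists2 r, extreme_ray C r & r x.
Hypothesis C_normal_dim1 :
  forall r x, extreme_ray C r -> r x -> x != 0 -> set_dim (normal_cone C x) 1.

Let C_nonempty : C !=set0.
Proof. by case: Cint => x /interior_subset Cx; exists x. Qed.

Lemma polar_regular : regular_cone (polar C).
Proof.
split; [exact: polar_cone | exact: polar_convex | exact: polar_pointed |
  exact: polar_closed | exact: polar_interior].
Qed.

Lemma orth_ray_extreme x y : C x -> x != 0 -> polar C y -> y != 0 -> inner x y = 0 ->
  extreme_ray (polar C) (ray y).
Proof.
move=> Cx x0 Py y0 xy.
have xint : ~ interior C x.
  by move=> xint; move/eqP: y0; apply; exact: interior_polar_orth xint Py xy.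
have [r r_ext rx] := C_boundary_ray (conj (subset_closure Cx) xint).
have Nxy : normal_cone C x y by apply/(normal_coneP _ Ccone Ccvx Cx); rewrite innerC.
exact: normal_ray_extreme Ccone Ccvx (polar_pointed Cint) Cx
  (C_normal_dim1 r_ext rx x0) Nxy y0.
Qed.

Lemma exists_orth_pair : ~ interior C 0 ->
  exists x y, [/\ C x, x != 0, polar C y, y != 0 & inner x y = 0].
Proof.
move=> int0; have C_0 := cone0 Ccone C_nonempty.
have [r r_ext _] := C_boundary_ray (conj (subset_closure C_0) int0).
have [x x0 [r_ray [rC _ _]]] := r_ext.
have rx : r x by rewrite r_ray; exists 1; rewrite ?scale1r.
have [[y y0 Ny] _] := set_dim1_line (C_normal_dim1 r_ext rx x0).
have [Py yx] := (normal_coneP _ Ccone Ccvx (rC _ rx)).1 Ny.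
by exists x, y; split => //; [exact: rC | rewrite innerC].
Qed.

Lemma polar_boundary_ray y : boundary (polar C) y ->
  exists2 r, extreme_ray (polar C) r & r y.
Proof.
move=> [cly yint]; have Py : polar C y := @polar_closed C y cly.
have [y_eq0|y0] := eqVneq y 0; last first.
  have [x [Cx x0 xy]] := polar_boundary_orth Ccone Ccl Py yint.
  by exists (ray y); [exact: orth_ray_extreme xy | exists 1; rewrite ?scale1r].
subst y; have int0 : ~ interior C 0.
  move=> /interior_polar_orth P_eq0; apply: yint.
  have [z zint] := polar_interior Ccone Ccvx Cpointed Ccl C_nonempty.
  by have z0 := P_eq0 z (interior_subset zint) (inner0l z); move: zint; rewrite z0.
have [x [y1 [Cx x0 Py1 y10 xy1]]] := exists_orth_pair int0.
by exists (ray y1); [exact: orth_ray_extreme xy1 | exists 0; rewrite ?scale0r].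
Qed.

(* Otherwise the whole space would be the line through the extreme ray, which
   contains no pair of nonzero orthogonal vectors. *)
Lemma polar_extreme_ray_not_interior r y : extreme_ray (polar C) r -> r y -> y != 0 ->
  ~ interior (polar C) y.
Proof.
move=> [g g0 [-> r_face]] ry y0 yint.
have span := face_ray_interior r_face ry yint.
have Py : polar C y by case: r_face => rP _ _; exact: rP.
have int0 : ~ interior C 0.
  by move=> int0; move/eqP: y0; apply; exact: interior_polar_orth int0 Py (inner0l y).
have [x [y1 [_ x0 _ y10 xy1]]] := exists_orth_pair int0.
have [a x_ag] := span x; have [b y1_bg] := span y1.
have a0 : a != 0 by apply: contraNneq x0 => a0; rewrite x_ag a0 scale0r.
have b0 : b != 0 by apply: contraNneq y10 => b0; rewrite y1_bg b0 scale0r.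
move: xy1; rewrite x_ag y1_bg innerZl innerZr => /eqP.
by rewrite !mulf_eq0 (negbTE a0) (negbTE b0) gt_eqF ?inner_self_gt0.
Qed.

(* x + a is the midpoint of 2x and 2a on the extreme ray through x + a, which is a
   face of C. *)
Lemma boundary_sum_collinear x a : C x -> C a -> x != 0 -> ~ interior C (x + a) ->
  exists t, a = t *: x.
Proof.
move=> Cx Ca x0 xa_int; have Cxa := coneD Ccone Ccvx Cx Ca.
have [r [m _ [-> [_ _ face]]] rxa] := C_boundary_ray (conj (subset_closure Cxa) xa_int).
have mid : 1 / 2 *: (2 *: x) + (1 - 1 / 2) *: (2 *: a) = x + a.
  by apply/rowP => i; rewrite !mxE; field.
have [[s _ xs] [t _ a_t]] := face _ _ (1 / 2) (Ccone Cx (ler0n _ 2))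
  (Ccone Ca (ler0n _ 2)) ltac:(lra) ltac:(lra) (eq_ind_r _ rxa mid).
have two0 : (2 : R) != 0 by rewrite pnatr_eq0.
have s0 : s != 0.
  by apply: contraNneq x0 => s0; apply/eqP/(scalerI two0); rewrite xs s0 scale0r scaler0.
exists (t / s); apply: (scalerI two0).
by rewrite a_t scalerA mulrC -scalerA xs scalerA divfK.
Qed.

Lemma polar_normal_dim1 r y : extreme_ray (polar C) r -> r y -> y != 0 ->
  set_dim (normal_cone (polar C) y) 1.
Proof.
move=> r_ext ry y0.
have Py : polar C y by case: r_ext ry => y1 _ [-> [rP _ _]] /rP.
have [x [Cx x0 xy]] :=
  polar_boundary_orth Ccone Ccl Py (polar_extreme_ray_not_interior r_ext ry y0).
have PPC := polarK Ccone Ccvx Ccl C_nonempty.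
have NP a : normal_cone (polar C) y a <-> C a /\ inner a y = 0.
  rewrite -[in X in _ <-> X]PPC.
  exact: (normal_coneP _ (@polar_cone C) (@polar_convex C) Py).
apply: (set_dim1_of_line x0); first exact/NP.
move=> a /NP [Ca ay]; apply: boundary_sum_collinear Cx Ca x0 _ => xa_int.
move/eqP: y0; apply; apply: interior_polar_orth xa_int Py _.
by rewrite innerDl xy ay addr0.
Qed.

Lemma polar_smooth : smooth_cone (polar C).
Proof.
by split; [exact: polar_regular | exact: polar_boundary_ray | exact: polar_normal_dim1].
Qed.

End SmoothCone.
End EuclideanCones.

Theorem corollary1 (R : realType) (n : nat) (C : set 'rV[R]_n) :
  smooth_cone C -> smooth_cone (polar C).
Proof.
by move=> [[Ccone Ccvx Cpointed Ccl Cint] C_boundary_ray C_normal_dim1];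
  exact: polar_smooth.
Qed.
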